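(* Let $M,M'\in\mathrm{Mat}(2,\mathbb{Z})$. Each of the following equivalent conditions — (a) for all integers $n\ge2$ the reductions mod $n$ of $M$ and $M'$ are $\mathrm{Mat}(2,\mathbb{Z}_n)^\times$-conjugate; (b) $\det(M)=\det(M')$, $\mathrm{trace}(M)=\mathrm{trace}(M')$ and $\mathrm{mgcd}(M)=\mathrm{mgcd}(M')$ — is equivalent to $M$ and $M'$ being $\mathrm{GL}(2,\widehat{\mathbb{Z}})$-conjugate.
   Context: For $M=\begin{pmatrix}a&b\\c&d\end{pmatrix}$, $\mathrm{mgcd}(M)=\gcd(b,c,d-a)\ge0$. $\mathrm{Mat}(2,\mathbb{Z}_n)^\times$ is the group of invertible $2\times2$ matrices over $\mathbb{Z}_n=\mathbb{Z}/n\mathbb{Z}$. $\widehat{\mathbb{Z}}=\varprojlim\mathbb{Z}_n$ is the inverse limit of the rings $\mathbb{Z}_n$ over the positive integers ordered by divisibility (the Prüfer ring), and $\mathrm{GL}(2,\widehat{\mathbb{Z}})$ is the group of invertible $2\times2$ matrices over it. *)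

From mathcomp Require Import all_boot all_order all_algebra.
Set Implicit Arguments. Unset Strict Implicit. Unset Printing Implicit Defensive.
Import Order.TTheory GRing.Theory Num.Theory.
Local Open Scope ring_scope.

Definition mgcd (M : 'M[int]_2) : nat :=
  absz (gcdz (gcdz (M 0 1) (M 1 0)) (M 1 1 - M 0 0)).

Definition redmx (n : nat) (M : 'M[int]_2) : 'M['Z_n]_2 :=
  map_mx (fun x : int => x%:~R) M.

Definition conj_mod (n : nat) (M M' : 'M[int]_2) : Prop :=
  exists U : 'M['Z_n]_2, U \in unitmx /\ U *m redmx n M = redmx n M' *m U.

(* Matrices over the Pruefer ring Zhat = lim Z_n.  Since Z_1 is trivial, the
   inverse limit over all n >= 1 agrees with the one over n >= 2; we index by
   k : nat standing for the modulus k.+2.  A 2x2 matrix over Zhat is a family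
   of matrices over Z_(k.+2) compatible with the reduction maps Z_m -> Z_d for
   d | m. *)
Definition redZ (m d : nat) (x : 'Z_m) : 'Z_d := (nat_of_ord x)%:R.

Definition zhat_mx := forall k : nat, 'M['Z_(k.+2)]_2.

Definition compatible (A : zhat_mx) : Prop :=
  forall k l : nat, (l.+2 %| k.+2)%N ->
    map_mx (@redZ k.+2 l.+2) (A k) = A l.

Definition zhat_of_int (M : 'M[int]_2) : zhat_mx := fun k => redmx k.+2 M.

Definition in_GL2_zhat (U : zhat_mx) : Prop :=
  compatible U /\
  exists V : zhat_mx, compatible V /\
    forall k, U k *m V k = 1%:M /\ V k *m U k = 1%:M.

Definition conj_zhat (M M' : 'M[int]_2) : Prop :=
  exists U : zhat_mx, in_GL2_zhat U /\
    forall k, U k *m zhat_of_int M k = zhat_of_int M' k *m U k.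

(* Write M = a + g N with g = mgcd M, a = M 0 0; then N is primitive (mgcd N = 1).
   For a vector u the matrix U = [u | N u] satisfies N U = U C with C the companion
   matrix of N, hence M U = U K with K = a + g C.  Now det U is the value at u of the
   primitive binary form N10 x^2 + (N11 - N00) x y - N01 y^2, and u can be chosen in
   Zhat^2 (through the idempotents of Zhat = prod_p Z_p attached to sets of primes) so
   that this value is a unit at every level: M is GL(2, Zhat)-conjugate to K.  If M'
   has the same determinant, trace and mgcd, the discriminants of K and K' agree, which
   forces a = a' mod g, and then K and K' are conjugate by an integral shear.
   Conversely, conjugacy mod n preserves det and tr mod n and the set a + g Mat(2, Z_n),
   so gcd(mgcd M, n) divides mgcd M' for every n. *)

From HB Require Import structures.
From mathcomp Require Import all_boot all_order all_algebra.
From mathcomp Require Import ring zify.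
Import GRing.Theory Num.Theory.

(* The idempotent of Zhat that is 1 at the primes of pi and 0 at the others, read in Z_n. *)
Definition pi_idem (pi : nat_pred) (n : nat) : nat := chinese n`_pi n`_pi^' 1 0.

Lemma pi_idem_mod_pi pi n : pi_idem pi n = 1 %[mod n`_pi].
Proof. exact: chinese_modl (coprime_partC pi n n) _ _. Qed.

Lemma pi_idem_mod_pi' pi n : pi_idem pi n = 0 %[mod n`_pi^'].
Proof. exact: chinese_modr (coprime_partC pi n n) _ _. Qed.

Lemma pi_idem_mod_dvd pi m d : 0 < m -> d %| m -> pi_idem pi m = pi_idem pi d %[mod d].
Proof.
move=> m_gt0 dvd_dm; have d_gt0 := dvdn_gt0 m_gt0 dvd_dm.
apply/eqP; rewrite -{1 3}(partnC pi d_gt0) chinese_remainder ?coprime_partC //.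
have dvd_pi := partn_dvd pi m_gt0 dvd_dm; have dvd_pi' := partn_dvd pi^' m_gt0 dvd_dm.
rewrite -(modn_dvdm _ dvd_pi) pi_idem_mod_pi modn_dvdm // pi_idem_mod_pi eqxx /=.
by rewrite -(modn_dvdm _ dvd_pi') pi_idem_mod_pi' modn_dvdm // pi_idem_mod_pi'.
Qed.

Lemma pi_idem_mod_prime pi n p : 0 < n -> prime p -> p %| n ->
  pi_idem pi n = (p \in pi) %[mod p].
Proof.
move=> n_gt0 p_pr dvd_pn; have p_gt1 := prime_gt1 p_pr.
have dvd_ppart (rho : nat_pred) : p \in rho -> p %| n`_rho.
  by move=> rho_p; rewrite -{1}(@part_pnat_id rho p) ?pnatE ?partn_dvd.
case: (boolP (p \in pi)) => [pi_p | pi'_p].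
  have dvd_p := dvd_ppart _ pi_p.
  by rewrite -(modn_dvdm _ dvd_p) pi_idem_mod_pi modn_dvdm.
have dvd_p := dvd_ppart pi^' pi'_p.
by rewrite -(modn_dvdm _ dvd_p) pi_idem_mod_pi' modn_dvdm.
Qed.

Lemma coprime_prime_dvd (n m : nat) : 0 < n ->
  (forall p, prime p -> p %| n -> ~~ (p %| m)) -> coprime n m.
Proof.
move=> n_gt0 ndvd_m; apply: contraT => ncop.
have gt1 : 1 < gcdn n m by rewrite ltn_neqAle eq_sym ncop gcdn_gt0 n_gt0.
have dvd_pg := pdiv_dvd (gcdn n m).
have := ndvd_m _ (pdiv_prime gt1) (dvdn_trans dvd_pg (dvdn_gcdl n m)).
by rewrite (dvdn_trans dvd_pg (dvdn_gcdr n m)).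
Qed.

Local Open Scope ring_scope.

Section IntegersModN.
Variable n : nat.
Hypothesis n_gt1 : (1 < n)%N.

Lemma Zp_intr_eq0 (z : int) : ((z%:~R : 'Z_n) == 0) = (n %| z)%Z.
Proof.
suff natE (m : nat) : ((m%:R : 'Z_n) == 0) = (n %| m)%N.
  by case: z => m; rewrite ?NegzE ?mulrNz ?oppr_eq0 -pmulrn natE.
by rewrite -(inj_eq val_inj) /= val_Zp_nat // -/(dvdn n m).
Qed.

Lemma Zp_intr_unit (z : int) : ((z%:~R : 'Z_n) \is a GRing.unit) = coprime n `|z|.
Proof. by case: z => m; rewrite ?NegzE ?mulrNz ?unitrN -pmulrn unitZpE. Qed.

Lemma Zp_intr_unit_Fp (z : int) :
  (forall p, prime p -> (p %| n)%N -> (z%:~R : 'F_p) != 0) -> (z%:~R : 'Z_n) \is a GRing.unit.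
Proof.
move=> nz_Fp; rewrite Zp_intr_unit; apply: coprime_prime_dvd => [|p p_pr dvd_pn].
  exact: ltnW.
by have := dvdz_pcharf (pchar_Fp p_pr) z; rewrite dvdzE /= => ->; exact: nz_Fp.
Qed.

Lemma dvdz_gcd_Zp (G z : int) (y : 'Z_n) : z%:~R = G%:~R * y -> (gcdz G n %| z)%Z.
Proof.
rewrite -[y]natr_Zp pmulrn -intrM => /eqP; rewrite -subr_eq0 -intrB Zp_intr_eq0 => dvd_n.
rewrite -(subrK (G * (y : nat)%:Z) z) rpredD ?dvdz_mulr ?dvdz_gcdl //.
exact: dvdz_trans (dvdz_gcdr _ _) dvd_n.
Qed.

End IntegersModN.

Lemma Zp_intr_inj (z z' : int) :
  (forall n, (1 < n)%N -> (z%:~R : 'Z_n) = z'%:~R) -> z = z'.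
Proof.
move=> eq_mod; apply/eqP; rewrite -subr_eq0.
have n_gt1 : (1 < `|z - z'|.+2)%N by [].
move/eqP: (eq_mod _ n_gt1); rewrite -subr_eq0 -intrB Zp_intr_eq0 // dvdzE /= -absz_eq0.
by case: (posnP `|z - z'|) => [-> // | gt0 /(dvdn_leq gt0)]; rewrite ltnNge leqnSn.
Qed.

Section ReductionMap.
Variables (m d : nat).
Hypotheses (m_gt0 : (0 < m)%N) (d_gt1 : (1 < d)%N) (dvd_dm : (d %| m)%N).

Local Notation red := (@redZ m d).

Let m_gt1 : (1 < m)%N. Proof. exact: leq_trans d_gt1 (dvdn_leq m_gt0 dvd_dm). Qed.

Lemma redZ_nat (k : nat) : red (k%:R : 'Z_m) = k%:R.
Proof. by rewrite /redZ val_Zp_nat // -Zp_nat_mod // modn_dvdm // Zp_nat_mod. Qed.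

Lemma redZ_zmod_morphism : GRing.zmod_morphism red.
Proof.
have redZD (x y : 'Z_m) : red (x + y) = red x + red y.
  by rewrite -[x]natr_Zp -[y]natr_Zp -natrD !redZ_nat natrD.
by move=> x y; apply: (addIr (red y)); rewrite -redZD !subrK.
Qed.

Lemma redZ_monoid_morphism : GRing.monoid_morphism red.
Proof.
split=> [|x y]; first exact: (redZ_nat 1).
by rewrite -[x]natr_Zp -[y]natr_Zp -natrM !redZ_nat natrM.
Qed.

Definition redZ_rmorphism : {rmorphism 'Z_m -> 'Z_d} :=
  HB.pack red
    (GRing.isZmodMorphism.Build _ _ _ redZ_zmod_morphism)
    (GRing.isMonoidMorphism.Build _ _ _ redZ_monoid_morphism).

Lemma redZ_int (z : int) : red z%:~R = z%:~R.
Proof. exact: (rmorph_int redZ_rmorphism). Qed.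

Lemma map_redZ_mxM p q r (A : 'M['Z_m]_(p, q)) (B : 'M_(q, r)) :
  map_mx red (A *m B) = map_mx red A *m map_mx red B.
Proof. exact: (map_mxM redZ_rmorphism). Qed.

Lemma map_redZ_mx1 p : map_mx red (1%:M : 'M['Z_m]_p) = 1%:M.
Proof. exact: (map_mx1 redZ_rmorphism). Qed.

End ReductionMap.

Section ZhatMatrices.
Implicit Types (U V : zhat_mx) (M : 'M[int]_2).

Lemma compatibleM U V : compatible U -> compatible V -> compatible (fun k => U k *m V k).
Proof. by move=> cU cV k l dvd_lk; rewrite map_redZ_mxM ?cU ?cV. Qed.

Lemma compatible_int M : compatible (zhat_of_int M).
Proof. by move=> k l dvd_lk; apply/matrixP=> i j; rewrite !mxE redZ_int. Qed.

Lemma compatible_invmx {U} : compatible U -> (forall k, U k \in unitmx) ->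
  compatible (fun k => invmx (U k)).
Proof.
move=> cU unitU k l dvd_lk.
have : U l *m map_mx (@redZ k.+2 l.+2) (invmx (U k)) = 1%:M.
  by rewrite -(cU k l dvd_lk) -map_redZ_mxM ?mulmxV ?unitU ?map_redZ_mx1.
by move/(congr1 (mulmx (invmx (U l)))); rewrite mulmxA mulVmx ?unitU // mul1mx mulmx1.
Qed.

Lemma in_GL2_zhatP U : compatible U -> (forall k, U k \in unitmx) -> in_GL2_zhat U.
Proof.
move=> cU unitU; split=> //; exists (fun k => invmx (U k)).
by split=> [|k]; [exact: compatible_invmx | rewrite mulmxV ?mulVmx ?unitU].
Qed.

Lemma in_GL2_zhat_unit {U} : in_GL2_zhat U -> forall k, U k \in unitmx.
Proof. by case=> _ [V [_ eqV]] k; case: (eqV k) => /mulmx1_unit[]. Qed.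

Lemma conj_zhat_int_mx {T M M' : 'M[int]_2} :
  T \in unitmx -> T *m M = M' *m T -> conj_zhat M M'.
Proof.
move=> unitT eqT; exists (zhat_of_int T); split=> [|k].
  apply: in_GL2_zhatP => [|k]; first exact: compatible_int.
  by rewrite /zhat_of_int /redmx unitmxE det_map_mx rmorph_unit -?unitmxE.
by rewrite /zhat_of_int /redmx -!map_mxM eqT.
Qed.

Lemma conj_zhat_refl M : conj_zhat M M.
Proof. by apply: (@conj_zhat_int_mx 1%:M); rewrite ?unitmx1 ?mul1mx ?mulmx1. Qed.

Lemma conj_zhat_sym {M M'} : conj_zhat M M' -> conj_zhat M' M.
Proof.
case=> U [GL_U eqU]; have unitU := in_GL2_zhat_unit GL_U.
exists (fun k => invmx (U k)); split=> [|k].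
  apply: in_GL2_zhatP => [|k]; first exact: compatible_invmx GL_U.1 unitU.
  by rewrite unitmx_inv unitU.
by rewrite -[zhat_of_int M' k](mulmxK (unitU k)) -eqU !mulmxA (mulVmx (unitU k)) mul1mx.
Qed.

Lemma conj_zhat_trans {M1 M2 M3} : conj_zhat M1 M2 -> conj_zhat M2 M3 -> conj_zhat M1 M3.
Proof.
case=> U [GL_U eqU] [V [GL_V eqV]]; exists (fun k => V k *m U k); split=> [|k].
  apply: in_GL2_zhatP => [|k]; first by apply: compatibleM; [case: GL_V | case: GL_U].
  by rewrite unitmx_mul !in_GL2_zhat_unit.
by rewrite -mulmxA eqU !mulmxA eqV.
Qed.

End ZhatMatrices.

Definition mx2 {R : Type} (a b c d : R) : 'M[R]_2 :=
  \matrix_(i < 2, j < 2) if (i : nat) == 0%N then (if (j : nat) == 0%N then a else b)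
                         else (if (j : nat) == 0%N then c else d).

Lemma eq_mx2 {R : Type} (A B : 'M[R]_2) :
  A 0 0 = B 0 0 -> A 0 1 = B 0 1 -> A 1 0 = B 1 0 -> A 1 1 = B 1 1 -> A = B.
Proof.
move=> e00 e01 e10 e11; apply/matrixP=> [[[|[|//]] i2] [[|[|//]] j2]];
  [move: e00 | move: e01 | move: e10 | move: e11];
  by congr (A _ _ = B _ _); apply: val_inj.
Qed.

Lemma mulmx2E (R : pzSemiRingType) (A B : 'M[R]_2) i j :
  (A *m B) i j = A i 0 * B 0 j + A i 1 * B 1 j.
Proof.
rewrite mxE !big_ord_recl big_ord0 addr0.
by congr (A _ _ * B _ _ + A _ _ * B _ _); apply: val_inj.
Qed.

Lemma det_mx22 (R : comPzRingType) (A : 'M[R]_2) : \det A = A 0 0 * A 1 1 - A 0 1 * A 1 0.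
Proof.
rewrite (expand_det_row _ 0) !big_ord_recl big_ord0 /cofactor !det_mx11 !mxE /=.
rewrite /bump /= expr0 expr1 addr0 mul1r mulN1r mulrN.
by congr (A _ _ * A _ _ - A _ _ * A _ _); apply: val_inj.
Qed.

Lemma trace_mx22 (R : pzSemiRingType) (A : 'M[R]_2) : \tr A = A 0 0 + A 1 1.
Proof.
by rewrite /mxtrace !big_ord_recl big_ord0 addr0; congr (A _ _ + A _ _); apply: val_inj.
Qed.

Section CyclicVector.
Variable R : comPzRingType.
Implicit Types (A X : 'M[R]_2) (a g x y : R).

Definition cyclic_mx A x y : 'M[R]_2 :=
  mx2 x (A 0 0 * x + A 0 1 * y) y (A 1 0 * x + A 1 1 * y).

Definition companion_mx A : 'M[R]_2 := mx2 0 (- \det A) 1 (\tr A).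

Lemma mulmx_cyclic A x y : A *m cyclic_mx A x y = cyclic_mx A x y *m companion_mx A.
Proof.
by rewrite /companion_mx det_mx22 trace_mx22; apply: eq_mx2; rewrite !mulmx2E !mxE /=; ring.
Qed.

Lemma det_cyclic_mx A x y :
  \det (cyclic_mx A x y) = A 1 0 * x ^+ 2 + (A 1 1 - A 0 0) * x * y - A 0 1 * y ^+ 2.
Proof. by rewrite det_mx22 !mxE /=; ring. Qed.

Lemma det_companion_mx A : \det (companion_mx A) = \det A.
Proof. by rewrite [LHS]det_mx22 !mxE /=; ring. Qed.

Lemma tr_companion_mx A : \tr (companion_mx A) = \tr A.
Proof. by rewrite [LHS]trace_mx22 !mxE /=; ring. Qed.

Lemma det_affine_mx a g X :
  \det (a%:M + g *: X) = a ^+ 2 + a * g * \tr X + g ^+ 2 * \det X.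
Proof. by rewrite !det_mx22 trace_mx22 !mxE /=; ring. Qed.

Lemma tr_affine_mx a g X : \tr (a%:M + g *: X) = a *+ 2 + g * \tr X.
Proof. by rewrite mxtraceD mxtrace_scalar mxtraceZ. Qed.

End CyclicVector.

Arguments cyclic_mx {R}.
Arguments companion_mx {R}.

Lemma map_cyclic_mx (R S : comPzRingType) (f : {rmorphism R -> S}) (A : 'M[R]_2) x y :
  map_mx f (cyclic_mx A x y) = cyclic_mx (map_mx f A) (f x) (f y).
Proof. by apply: eq_mx2; rewrite !mxE /= ?rmorphD ?rmorphM. Qed.

Lemma map_companion_mx (R S : comPzRingType) (f : {rmorphism R -> S}) (A : 'M[R]_2) :
  map_mx f (companion_mx A) = companion_mx (map_mx f A).
Proof.
by apply: eq_mx2; rewrite !mxE /= ?rmorph0 ?rmorph1 ?rmorphN ?det_map_mx ?trace_map_mx.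
Qed.

Lemma mulmx_affine (R : comPzRingType) n (N U C : 'M[R]_n) a g :
  N *m U = U *m C -> (a%:M + g *: N) *m U = U *m (a%:M + g *: C).
Proof.
move=> NU; rewrite mulmxDl mulmxDr mul_scalar_mx mul_mx_scalar.
by rewrite -scalemxAl NU scalemxAr.
Qed.

Lemma conj_affine {R : comUnitRingType} {n} {U A B X : 'M[R]_n} {a g} :
  U \in unitmx -> U *m A = B *m U -> A = a%:M + g *: X ->
  B = a%:M + g *: (U *m X *m invmx U).
Proof.
move=> unitU UA eqA; rewrite -[B](mulmxK unitU) -UA eqA mulmxDr mulmxDl mul_mx_scalar.
by rewrite -scalemxAl mulmxV // scalemx1 -scalemxAr -scalemxAl.
Qed.

Lemma det_conj {R : comUnitRingType} {n} {U A B : 'M[R]_n} :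
  U \in unitmx -> U *m A = B *m U -> \det A = \det B.
Proof.
rewrite unitmxE => unitU UA; apply: (mulrI unitU).
by rewrite -det_mulmx UA det_mulmx mulrC.
Qed.

Lemma tr_conj {R : comUnitRingType} {n} {U A B : 'M[R]_n} :
  U \in unitmx -> U *m A = B *m U -> \tr A = \tr B.
Proof.
move=> unitU UA; rewrite -[B](mulmxK unitU) -UA mxtrace_mulC mulmxA.
by rewrite mulVmx // mul1mx.
Qed.

Definition shear (s : int) : 'M[int]_2 := mx2 1 s 0 1.

Lemma shear_unit s : shear s \in unitmx.
Proof. by rewrite unitmxE det_mx22 !mxE /= mulr1 mulr0 subr0 unitr1. Qed.

Lemma dvdz2_sub_of_sqr (d d' q q' : int) :
  d ^+ 2 + 4 * q = d' ^+ 2 + 4 * q' -> (2 %| d' - d)%Z.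
Proof.
move=> eq_disc; have two_pr : prime 2 by [].
have : (2 %| (d' - d) * (d' - d + 2 * d))%Z.
  apply/dvdzP; exists (2 * (q - q')); lia.
rewrite dvdzE abszM Euclid_dvdM // -!dvdzE.
by case/orP=> //; rewrite rpredDr // dvdz_mulr.
Qed.

Lemma affine_companion_shear (a a' g q q' d d' : int) : g != 0 ->
  \det (a%:M + g *: mx2 0 q 1 d) = \det (a'%:M + g *: mx2 0 q' 1 d') ->
  \tr (a%:M + g *: mx2 0 q 1 d) = \tr (a'%:M + g *: mx2 0 q' 1 d') ->
  exists s, (a%:M + g *: mx2 0 q 1 d) *m shear s = shear s *m (a'%:M + g *: mx2 0 q' 1 d').
Proof.
move=> nz_g; rewrite !det_affine_mx !tr_affine_mx !det_mx22 !trace_mx22 !mxE /= => eq_det eq_tr.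
have nz_g2 : g ^+ 2 != 0 by rewrite expf_neq0.
(* (tr K)^2 - 4 det K = g^2 (d^2 + 4 q) *)
have /(dvdz2_sub_of_sqr)/dvdzP[t eq_d'] : d ^+ 2 + 4 * q = d' ^+ 2 + 4 * q'.
  by apply: (mulfI nz_g2); lia.
have ed' : d' = d + t * 2 by lia.
have ea : a = a' + t * g by lia.
have eq' : q' = q - t ^+ 2 - t * d.
  by apply: (mulfI nz_g2); lia.
by exists t; subst a q' d'; apply: eq_mx2; rewrite !mulmx2E !mxE /=; ring.
Qed.

Section MgcdDecomposition.
Implicit Types (M N : 'M[int]_2) (a g : int).

Definition mgcd_part M : 'M[int]_2 :=
  let g := (mgcd M)%:Z in mx2 0 (divz (M 0 1) g) (divz (M 1 0) g) (divz (M 1 1 - M 0 0) g).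

Lemma mgcd_partE M : M = (M 0 0)%:M + (mgcd M)%:Z *: mgcd_part M.
Proof.
have dvd_gcd_l := dvdz_gcdl (gcdz (M 0 1) (M 1 0)) (M 1 1 - M 0 0).
have dvd_e := dvdz_gcdr (gcdz (M 0 1) (M 1 0)) (M 1 1 - M 0 0).
have dvd_b := dvdz_trans dvd_gcd_l (dvdz_gcdl _ _).
have dvd_c := dvdz_trans dvd_gcd_l (dvdz_gcdr _ _).
apply: eq_mx2; rewrite !mxE /= ?mulr1n ?mulr0n ?mulr0 ?addr0 ?add0r // mulrC divzK //.
by rewrite addrC subrK.
Qed.

Lemma mgcd_eq0_scalar {M} : mgcd M = 0%N -> M = (M 0 0)%:M.
Proof. by move=> g0; rewrite {1}(mgcd_partE M) g0 scale0r addr0. Qed.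

Lemma mgcd_affine a g N : mgcd (a%:M + g *: N) = (`|g| * mgcd N)%N.
Proof.
rewrite /mgcd /gcdz /= !mxE /= !mulr1n !mulr0n !add0r.
by rewrite opprD addrACA subrr add0r -mulrBr !abszM -!muln_gcdr.
Qed.

Lemma mgcd_part_eq1 {M} : mgcd M != 0%N -> mgcd (mgcd_part M) = 1%N.
Proof.
move=> nz_g; have := congr1 mgcd (mgcd_partE M); rewrite mgcd_affine /= => /eqP.
by rewrite -{1}[mgcd M]muln1 eqn_pmul2l ?lt0n // eq_sym => /eqP.
Qed.

End MgcdDecomposition.

Lemma binary_form_neq0 (R : nzRingType) (b c e : R) : [|| b != 0, c != 0 | e != 0] ->
  let x : R := ((c != 0) || (b == 0))%:R in let y : R := (c == 0)%:R in
  c * x ^+ 2 + e * x * y - b * y ^+ 2 != 0.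
Proof.
move=> nz_bce /=; have [c0 | nz_c] := eqVneq c 0 => /=; last first.
  by rewrite expr1n expr0n !mulr0 mulr1 addr0 subr0.
move: nz_bce; rewrite c0 eqxx !mul0r add0r /=; have [-> | nz_b] := eqVneq b 0 => /= nz.
  by rewrite expr1n !mulr1 subr0.
by rewrite mulr0 mul0r expr1n mulr1 sub0r oppr_eq0.
Qed.

Section CyclicZhat.
Variable N : 'M[int]_2.

(* Modulo a prime p the vector u = (x, y) becomes (1, 0) if p does not divide N 1 0,
   (0, 1) if p divides N 1 0 but not N 0 1, and (1, 1) otherwise. *)
Definition cyclic_pi_x : nat_pred :=
  [pred p : nat | (N 1 0 \notin dvdz p) || (N 0 1 \in dvdz p)].
Definition cyclic_pi_y : nat_pred := [pred p : nat | N 1 0 \in dvdz p].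

Definition cyclic_zhat : zhat_mx := fun k =>
  cyclic_mx (redmx k.+2 N) (pi_idem cyclic_pi_x k.+2)%:R (pi_idem cyclic_pi_y k.+2)%:R.

Lemma compatible_cyclic_zhat : compatible cyclic_zhat.
Proof.
move=> k l dvd_lk; rewrite /cyclic_zhat.
rewrite (map_cyclic_mx _ _ (@redZ_rmorphism k.+2 l.+2 _ _ dvd_lk)) //.
have idemE P : ((pi_idem P k.+2)%:R : 'Z_l.+2) = (pi_idem P l.+2)%:R.
  by rewrite -Zp_nat_mod // pi_idem_mod_dvd // Zp_nat_mod.
by rewrite compatible_int // !rmorph_nat !idemE.
Qed.

Lemma cyclic_zhat_unit k : mgcd N = 1%N -> cyclic_zhat k \in unitmx.
Proof.
move=> primN; set x := pi_idem cyclic_pi_x k.+2; set y := pi_idem cyclic_pi_y k.+2.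
have -> : cyclic_zhat k = redmx k.+2 (cyclic_mx N x%:R y%:R).
  by rewrite /redmx map_cyclic_mx !rmorph_nat.
rewrite unitmxE /redmx det_map_mx; apply: Zp_intr_unit_Fp => // p p_pr dvd_pk.
have idemE P : ((pi_idem P k.+2)%:R : 'F_p) = (p \in P)%:R.
  by rewrite -(Fp_nat_mod p_pr) pi_idem_mod_prime // Fp_nat_mod.
have dvdFp z : (z \in dvdz p) = (z%:~R == 0 :> 'F_p) := dvdz_pcharf (pchar_Fp p_pr) z.
rewrite -det_map_mx map_cyclic_mx !rmorph_nat det_cyclic_mx !mxE !idemE !inE !dvdFp.
apply: binary_form_neq0; rewrite -intrB -!dvdFp -!negb_and; apply: contraL (prime_gt1 p_pr).
case/and3P=> b0 c0 e0.
have : gcdz (gcdz (N 0 1) (N 1 0)) (N 1 1 - N 0 0) \in dvdz p by rewrite !dvdz_gcd b0 c0.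
by rewrite -[gcdz _ _]/((mgcd N)%:Z) primN dvdzE /= dvdn1 => /eqP ->.
Qed.

End CyclicZhat.

Definition companion_form (M : 'M[int]_2) : 'M[int]_2 :=
  (M 0 0)%:M + (mgcd M)%:Z *: companion_mx (mgcd_part M).

Lemma det_companion_form M : \det (companion_form M) = \det M.
Proof.
by rewrite [in RHS](mgcd_partE M) !det_affine_mx det_companion_mx tr_companion_mx.
Qed.

Lemma tr_companion_form M : \tr (companion_form M) = \tr M.
Proof. by rewrite [in RHS](mgcd_partE M) !tr_affine_mx tr_companion_mx. Qed.

Lemma conj_zhat_companion_form {M} : mgcd M != 0%N -> conj_zhat (companion_form M) M.
Proof.
move=> nz_g; set N := mgcd_part M; exists (cyclic_zhat N); split=> [|k].
  apply: in_GL2_zhatP => [|k]; first exact: compatible_cyclic_zhat.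
  exact: cyclic_zhat_unit (mgcd_part_eq1 nz_g).
rewrite /zhat_of_int [in redmx _ M](mgcd_partE M) -/N /redmx !map_mxD !map_mxZ.
rewrite !map_scalar_mx map_companion_mx; symmetry; apply: mulmx_affine.
exact: mulmx_cyclic.
Qed.

Lemma conj_zhat_of_invariants M M' :
  \det M = \det M' -> \tr M = \tr M' -> mgcd M = mgcd M' -> conj_zhat M M'.
Proof.
move=> eq_det eq_tr eq_g; have [g0 | nz_g] := eqVneq (mgcd M) 0%N.
  move: eq_tr; rewrite (mgcd_eq0_scalar g0) (mgcd_eq0_scalar (etrans (esym eq_g) g0)).
  rewrite !mxtrace_scalar => /eqP; rewrite -subr_eq0 -mulrnBl mulrn_eq0 subr_eq0.
  by move=> /eqP ->; exact: conj_zhat_refl.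
have nz_g' : mgcd M' != 0%N by rewrite -eq_g.
have [s eqK] : exists s, companion_form M *m shear s = shear s *m companion_form M'.
  have detK : \det (companion_form M) = \det (companion_form M').
    by rewrite !det_companion_form.
  have trK : \tr (companion_form M) = \tr (companion_form M').
    by rewrite !tr_companion_form.
  move: detK trK; rewrite /companion_form -eq_g.
  by apply: affine_companion_shear; rewrite eqz_nat.
apply: conj_zhat_trans (conj_zhat_sym (conj_zhat_companion_form nz_g)) _.
apply: conj_zhat_trans (conj_zhat_companion_form nz_g').
exact: conj_zhat_sym (conj_zhat_int_mx (shear_unit s) (esym eqK)).
Qed.

Section ConjugacyModN.
Context {n : nat} {M M' : 'M[int]_2}.

Lemma conj_mod_sym : conj_mod n M M' -> conj_mod n M' M.
Proof.
case=> U [unitU UM]; exists (invmx U); split; first by rewrite unitmx_inv.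
by rewrite -[redmx n M'](mulmxK unitU) -UM !mulmxA mulVmx // mul1mx.
Qed.

Lemma conj_mod_det : conj_mod n M M' -> ((\det M)%:~R : 'Z_n) = (\det M')%:~R.
Proof. by case=> U [unitU UM]; rewrite -!det_map_mx; exact: det_conj unitU UM. Qed.

Lemma conj_mod_tr : conj_mod n M M' -> ((\tr M)%:~R : 'Z_n) = (\tr M')%:~R.
Proof. by case=> U [unitU UM]; rewrite -!trace_map_mx; exact: tr_conj unitU UM. Qed.

Lemma conj_mod_mgcd : (1 < n)%N -> conj_mod n M M' -> (gcdz (mgcd M) n %| (mgcd M')%:Z)%Z.
Proof.
move=> n_gt1 [U [unitU UM]].
have redME : redmx n M = ((M 0 0)%:~R)%:M + ((mgcd M)%:Z)%:~R *: redmx n (mgcd_part M).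
  by rewrite [in LHS](mgcd_partE M) /redmx map_mxD map_mxZ map_scalar_mx.
have := conj_affine unitU UM redME; move: (U *m _ *m invmx U) => Y M'E.
have entryE (i j : 'I_2) := congr1 (fun A : 'M['Z_n]_2 => A i j) M'E.
have dvd_entry (z : int) (y : 'Z_n) :
    z%:~R = ((mgcd M)%:Z)%:~R * y -> (gcdz (mgcd M) n %| z)%Z.
  exact: (@dvdz_gcd_Zp n n_gt1).
rewrite -[(mgcd M')%:Z]/(gcdz _ _) !dvdz_gcd -andbA; apply/and3P; split.
- by apply: (dvd_entry _ (Y 0 1)); move: (entryE 0 1); rewrite !mxE /= mulr0n add0r.
- by apply: (dvd_entry _ (Y 1 0)); move: (entryE 1 0); rewrite !mxE /= mulr0n add0r.
- apply: (dvd_entry _ (Y 1 1 - Y 0 0)); move: (entryE 1 1) (entryE 0 0).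
  by rewrite intrB !mxE /= !mulr1n => -> ->; rewrite opprD addrACA subrr add0r mulrBr.
Qed.

End ConjugacyModN.

Lemma mgcd_dvd_of_conj_mod M M' :
  (forall n, (1 < n)%N -> conj_mod n M M') -> (mgcd M %| mgcd M')%N.
Proof.
move=> conjM; have [g0 | g_gt0] := posnP (mgcd M).
  have n_gt1 : (1 < (mgcd M').+2)%N by [].
  move: (conj_mod_mgcd n_gt1 (conjM _ n_gt1)); rewrite g0 dvdzE /= gcd0n dvd0n.
  by case: (posnP (mgcd M')) => // g'_gt0 /(dvdn_leq g'_gt0); rewrite ltnNge leqnSn.
have n_gt1 : (1 < mgcd M * 2)%N by lia.
move: (conj_mod_mgcd n_gt1 (conjM _ n_gt1)); rewrite dvdzE /=.
by rewrite (gcdn_idPl (dvdn_mulr _ _)).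
Qed.

Lemma invariants_of_conj_mod {M M'} : (forall n, (1 < n)%N -> conj_mod n M M') ->
  [/\ \det M = \det M', \tr M = \tr M' & mgcd M = mgcd M'].
Proof.
move=> conjM; split.
- by apply: Zp_intr_inj => n n_gt1; exact: conj_mod_det (conjM n n_gt1).
- by apply: Zp_intr_inj => n n_gt1; exact: conj_mod_tr (conjM n n_gt1).
apply/eqP; rewrite eqn_dvd !mgcd_dvd_of_conj_mod // => n n_gt1.
exact: conj_mod_sym (conjM n n_gt1).
Qed.

Lemma conj_mod_of_conj_zhat {M M'} : conj_zhat M M' -> forall n, (1 < n)%N -> conj_mod n M M'.
Proof.
case=> U [GL_U UM] [|[|k]] // _.
by exists (U k); split; [exact: in_GL2_zhat_unit | exact: UM].
Qed.

Theorem corollary43 (M M' : 'M[int]_2) :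
  ((forall n : nat, (1 < n)%N -> conj_mod n M M') <-> conj_zhat M M') /\
  ((\det M = \det M' /\ \tr M = \tr M' /\ mgcd M = mgcd M') <-> conj_zhat M M').
Proof.
have zhat_of_mod : (forall n, (1 < n)%N -> conj_mod n M M') -> conj_zhat M M'.
  by move/invariants_of_conj_mod=> [eq_det eq_tr eq_g]; exact: conj_zhat_of_invariants.
split; split=> [|conjM]; first exact: zhat_of_mod.
- exact: conj_mod_of_conj_zhat.
- by case=> eq_det [eq_tr eq_g]; exact: conj_zhat_of_invariants.
by have [] := invariants_of_conj_mod (conj_mod_of_conj_zhat conjM).
Qed.
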